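(* There is an absolute constant $C>0$ such that the following holds. Let $0<\varepsilon\le 1$ and let $S$ and $T$ be configurations of $n\ge 2$ points each whose smallest enclosing discs have the same center, such that any two distinct points of $S$, and any two distinct points of $T$, are at distance at least $2+\varepsilon$. Then for every direction $\delta$ there exists a translation $\vec v=\lambda\delta$ with $\lambda\ge 0$ such that the unlabeled problem from $S$ to $T+\vec v$ is feasible, $|\vec v|\le C\,(r(S)+r(T))/\sqrt{\varepsilon}$, and $r(S\cup(T+\vec v))\le C\,(r(S)+r(T))/\sqrt{\varepsilon}$.
   Context: For $p\in\mathbb R^2$, $D(p)$ is the open unit disc centered at $p$. $r(P)$ is the radius of the smallest closed disc containing the point set $P$. The unlabeled problem from $S$ to $T'$ is feasible if there exist a bijection $M:S\to T'$ and an ordering $s_1,\dots,s_n$ of $S$ such that for each $i$ the region $\mathrm{conv}(D(s_i)\cup D(M(s_i)))$ swept by translating $D(s_i)$ straight to $M(s_i)$ is disjoint from $D(s_j)$ for all $j>i$ and from $D(M(s_j))$ for all $j<i$. *)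

From Stdlib Require Import Reals Lra List Permutation.
From Coquelicot Require Import Coquelicot.
Open Scope R_scope.

Definition pt := (R * R)%type.

Definition dist2 (p q : pt) : R :=
  sqrt ((fst p - fst q) ^ 2 + (snd p - snd q) ^ 2).

Definition padd (p q : pt) : pt := (fst p + fst q, snd p + snd q).
Definition pscale (l : R) (p : pt) : pt := (l * fst p, l * snd p).
Definition pnorm (p : pt) : R := sqrt (fst p ^ 2 + snd p ^ 2).

Definition D (p : pt) (x : pt) : Prop := dist2 x p < 1.

Definition convex_set (C : pt -> Prop) : Prop :=
  forall x y t, C x -> C y -> 0 <= t <= 1 ->
    C (padd (pscale (1 - t) x) (pscale t y)).

Definition conv (A : pt -> Prop) (x : pt) : Prop :=
  forall C : pt -> Prop, convex_set C -> (forall y, A y -> C y) -> C x.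

(* region swept by translating D(s) straight to D(t) *)
Definition swept (s t : pt) : pt -> Prop :=
  conv (fun x => D s x \/ D t x).

Definition disjoint (A B : pt -> Prop) : Prop := forall x, ~ (A x /\ B x).

Definition encloses (P : list pt) (c : pt) (rho : R) : Prop :=
  forall p, In p P -> dist2 p c <= rho.

Definition r (P : list pt) : R :=
  real (Glb_Rbar (fun rho => exists c, encloses P c rho)).

Definition sed_center (P : list pt) (c : pt) : Prop := encloses P c (r P).

(* unlabeled motion-planning problem from S to T' is feasible:
   a bijection M : S -> T' and an ordering s_1..s_n of S, encoded as the
   ordering a of S together with b, where b_i = M(a_i). *)
Definition unlabeled_feasible (S T' : list pt) : Prop :=
  exists a b : list pt,
    Permutation S a /\ Permutation T' b /\ length a = length b /\
    forall i, (i < length a)%nat ->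
      (forall j, (i < j < length a)%nat ->
          disjoint (swept (nth i a (0,0)) (nth i b (0,0))) (D (nth j a (0,0)))) /\
      (forall j, (j < i)%nat ->
          disjoint (swept (nth i a (0,0)) (nth i b (0,0))) (D (nth j b (0,0)))).

Definition translate (P : list pt) (v : pt) : list pt := map (fun p => padd p v) P.

Definition config (n : nat) (d : R) (P : list pt) : Prop :=
  length P = n /\ NoDup P /\
  forall p q, In p P -> In q P -> p <> q -> d <= dist2 p q.

(* Fix a unit direction u and put Rp = r(S) + r(T).  Translate T by
   v = lam u with lam = 4 Rp / sqrt eps; since S and T share the centre c of
   their smallest enclosing discs, every offset t - s (s in S, t in T) has
   squared length at most 2 Rp^2, so each motion s -> t + v is a segment whose
   direction is lam u plus a comparatively short error e.  Schedule the
   sources in decreasing order of their projection on u, and match them to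
   the targets sorted the same way.  A source still waiting lies "behind"
   the moving disc (its offset w has w.u <= 0), and an already placed target
   lies "ahead" of it; a quadratic estimate (lemma [clearance]) then shows
   that the segment stays at distance >= 2 from such a point, using only
   |w| >= 2 + eps.  Hence the swept region, which lies in the open
   1-neighbourhood of the segment, misses the obstacle disc. *)

From Stdlib Require Import Reals List Lra Lia Psatz Sorting Permutation.
From Coquelicot Require Import Rbar Lub.
Open Scope R_scope.

Definition psub (p q : pt) : pt := (fst p - fst q, snd p - snd q).
Definition dot (p q : pt) : R := fst p * fst q + snd p * snd q.
Definition nsq (p : pt) : R := fst p ^ 2 + snd p ^ 2.
Definition sq (p q : pt) : R := nsq (psub p q).

Lemma nsq_nonneg p : 0 <= nsq p.
Proof. unfold nsq. pose proof (pow2_ge_0 (fst p)). pose proof (pow2_ge_0 (snd p)). lra. Qed.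

Lemma sq_sym p q : sq p q = sq q p.
Proof. unfold sq, nsq, psub; simpl; ring. Qed.

Lemma nsq_sub_scale w d tau :
  nsq (psub w (pscale tau d)) = nsq w - 2 * tau * dot w d + tau ^ 2 * nsq d.
Proof. unfold nsq, psub, pscale, dot; simpl; ring. Qed.

Lemma cauchy_schwarz p q : dot p q ^ 2 <= nsq p * nsq q.
Proof.
  assert (nsq p * nsq q - dot p q ^ 2 = (fst p * snd q - snd p * fst q) ^ 2)
    by (unfold nsq, dot; ring).
  pose proof (pow2_ge_0 (fst p * snd q - snd p * fst q)). lra.
Qed.

Lemma sq_midpoint p q c : sq p q <= 2 * sq p c + 2 * sq q c.
Proof.
  assert (2 * sq p c + 2 * sq q c - sq p q
          = nsq (fst p + fst q - 2 * fst c, snd p + snd q - 2 * snd c))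
    by (unfold sq, nsq, psub; simpl; ring).
  pose proof (nsq_nonneg (fst p + fst q - 2 * fst c, snd p + snd q - 2 * snd c)). lra.
Qed.

Lemma sq_convex y1 y2 q1 q2 t :
  0 <= t <= 1 ->
  sq (padd (pscale (1 - t) y1) (pscale t y2)) (padd (pscale (1 - t) q1) (pscale t q2))
  <= (1 - t) * sq y1 q1 + t * sq y2 q2.
Proof.
  intro Ht.
  assert ((1 - t) * sq y1 q1 + t * sq y2 q2
          - sq (padd (pscale (1 - t) y1) (pscale t y2)) (padd (pscale (1 - t) q1) (pscale t q2))
          = t * (1 - t) * nsq (psub (psub y1 q1) (psub y2 q2)))
    by (unfold sq, nsq, psub, padd, pscale; simpl; ring).
  pose proof (nsq_nonneg (psub (psub y1 q1) (psub y2 q2))).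
  assert (0 <= t * (1 - t)) by nra. nra.
Qed.

Lemma dist2_sq p q : dist2 p q = sqrt (sq p q).
Proof. reflexivity. Qed.

Lemma dist2_le_sq p q a : dist2 p q <= a -> sq p q <= a ^ 2.
Proof.
  rewrite dist2_sq. intro H. pose proof (sqrt_pos (sq p q)).
  rewrite <- (pow2_sqrt (sq p q)) by apply nsq_nonneg. apply pow_incr. lra.
Qed.

Lemma dist2_ge_sq p q a : 0 <= a -> a <= dist2 p q -> a ^ 2 <= sq p q.
Proof.
  rewrite dist2_sq. intros Ha H.
  rewrite <- (pow2_sqrt (sq p q)) by apply nsq_nonneg. apply pow_incr. lra.
Qed.

Lemma D_sq p x : D p x -> sq x p < 1.
Proof. unfold D. rewrite dist2_sq. intro H. apply sqrt_lt_0_alt. rewrite sqrt_1. exact H. Qed.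

Definition seg (s t : pt) (tau : R) : pt := padd s (pscale tau (psub t s)).

Definition tube (s t : pt) (y : pt) : Prop :=
  exists tau, 0 <= tau <= 1 /\ sq y (seg s t tau) < 1.

Lemma seg_affine s t t1 t2 a :
  seg s t ((1 - a) * t1 + a * t2) = padd (pscale (1 - a) (seg s t t1)) (pscale a (seg s t t2)).
Proof. unfold seg, padd, pscale, psub; simpl; f_equal; ring. Qed.

(* The tube is convex: it is the set where a convex function of (y, tau) is < 1. *)
Lemma tube_convex s t : convex_set (tube s t).
Proof.
  intros y1 y2 a [t1 [Ht1 H1]] [t2 [Ht2 H2]] Ha.
  exists ((1 - a) * t1 + a * t2). split; [nra|].
  rewrite seg_affine.
  eapply Rle_lt_trans; [apply sq_convex; exact Ha|].
  destruct (Rle_lt_or_eq_dec 0 a (proj1 Ha)) as [Ha0|<-]; [|lra].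
  assert (a * sq y2 (seg s t t2) < a * 1) by (apply Rmult_lt_compat_l; lra).
  assert ((1 - a) * sq y1 (seg s t t1) <= (1 - a) * 1) by (apply Rmult_le_compat_l; lra).
  lra.
Qed.

Lemma seg_ends s t : seg s t 0 = s /\ seg s t 1 = t.
Proof. destruct s, t; unfold seg, padd, pscale, psub; simpl; split; f_equal; ring. Qed.

(* The tube contains both end discs, ... *)
Lemma tube_contains_discs s t y : D s y \/ D t y -> tube s t y.
Proof.
  destruct (seg_ends s t) as [E0 E1].
  intros [Hy|Hy]; apply D_sq in Hy; [exists 0 | exists 1]; split; try lra.
  - rewrite E0. exact Hy.
  - rewrite E1. exact Hy.
Qed.

(* ... hence, being convex, the whole swept region; a disc whose centre stays at distance
   >= 2 from the segment is therefore disjoint from the swept region. *)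
Lemma swept_far s t p :
  (forall tau, 0 <= tau <= 1 -> 4 <= sq p (seg s t tau)) -> disjoint (swept s t) (D p).
Proof.
  intros Hfar x [Hx Hp].
  destruct (Hx (tube s t) (tube_convex s t) (tube_contains_discs s t)) as [tau [Ht Hq]].
  apply D_sq in Hp. specialize (Hfar tau Ht).
  pose proof (sq_midpoint p (seg s t tau) x) as Hmid.
  rewrite (sq_sym p x), (sq_sym (seg s t tau) x) in Hmid. lra.
Qed.
Lemma quadratic_clearance W x Dd tau :
  4 <= W -> 0 <= Dd -> (x <= 0 \/ x ^ 2 <= (W - 4) * Dd) -> 0 <= tau <= 1 ->
  4 <= W - 2 * tau * x + tau ^ 2 * Dd.
Proof.
  intros HW HD [Hx|Hx] Ht; [nra|].
  destruct (Rle_lt_or_eq_dec 0 Dd HD) as [HDp|<-]; [|nra].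
  assert (Dd * (W - 2 * tau * x + tau ^ 2 * Dd - 4) = (tau * Dd - x) ^ 2 + ((W - 4) * Dd - x ^ 2))
    by ring.
  pose proof (pow2_ge_0 (tau * Dd - x)). nra.
Qed.

(* The long component lam u makes e negligible:
   3|e|^2 <= eps |d|^2, which forces the discriminant condition. *)
Lemma clearance (w u e : pt) lam eps Rp tau :
  nsq u = 1 -> dot w u <= 0 -> (2 + eps) ^ 2 <= nsq w -> 0 < eps <= 1 ->
  nsq e <= 2 * Rp ^ 2 -> lam ^ 2 * eps = 16 * Rp ^ 2 -> 0 <= lam -> 0 <= tau <= 1 ->
  4 <= nsq (psub w (pscale tau (padd (pscale lam u) e))).
Proof.
  intros Hu Hwu Hw Heps He Hlam Hlam0 Htau.
  set (d := padd (pscale lam u) e).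
  rewrite nsq_sub_scale.
  set (W := nsq w) in *. set (E := nsq e) in *. set (Dd := nsq d).
  assert (HW4 : 4 <= W) by nra.
  assert (HE0 : 0 <= E) by apply nsq_nonneg.
  assert (HD0 : 0 <= Dd) by apply nsq_nonneg.
  apply quadratic_clearance; auto.
  destruct (Rle_dec (dot w d) 0) as [Hx|Hx]; [left; exact Hx|right].
  assert (Hlam2 : lam ^ 2 <= 2 * Dd + 2 * E).
  { assert (2 * Dd + 2 * E - lam ^ 2 * nsq u
            = nsq (lam * fst u + 2 * fst e, lam * snd u + 2 * snd e))
      by (unfold Dd, E, d, nsq, padd, pscale; simpl; ring).
    pose proof (nsq_nonneg (lam * fst u + 2 * fst e, lam * snd u + 2 * snd e)).
    rewrite Hu in *. lra. }
  assert (Hsmall : 3 * E <= eps * Dd) by nra.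
  assert (Hfar : 4 * eps * W <= 9 * (W - 4)) by nra.
  assert (Hxe : dot w d <= dot w e).
  { assert (dot w d = lam * dot w u + dot w e) by (unfold d, dot, padd, pscale; simpl; ring).
    nra. }
  pose proof (cauchy_schwarz w e) as HCS. fold W E in HCS.
  assert (Hkey : 4 * eps * (W * E) <= 4 * eps * ((W - 4) * Dd)) by nra.
  assert (W * E <= (W - 4) * Dd) by nra.
  nra.
Qed.

Lemma later_source_clear (si sj t u : pt) lam eps Rp :
  nsq u = 1 -> dot (psub sj si) u <= 0 -> 2 + eps <= dist2 sj si -> 0 < eps <= 1 ->
  sq t si <= 2 * Rp ^ 2 -> lam ^ 2 * eps = 16 * Rp ^ 2 -> 0 <= lam ->
  disjoint (swept si (padd t (pscale lam u))) (D sj).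
Proof.
  intros Hu Hdir Hsep Heps Hoff Hlam Hlam0.
  apply swept_far. intros tau Htau.
  replace (sq sj (seg si (padd t (pscale lam u)) tau))
    with (nsq (psub (psub sj si) (pscale tau (padd (pscale lam u) (psub t si)))))
    by (unfold sq, seg, nsq, psub, padd, pscale; simpl; ring).
  apply (clearance _ _ _ lam eps Rp); auto.
  apply dist2_ge_sq; [lra | exact Hsep].
Qed.

(* A target placed earlier (projection on u not smaller) is not hit either;
   this is [clearance] run backwards from the target with direction -u. *)
Lemma earlier_target_clear (si tj t u : pt) lam eps Rp :
  nsq u = 1 -> 0 <= dot (psub tj t) u -> 2 + eps <= dist2 tj t -> 0 < eps <= 1 ->
  sq t si <= 2 * Rp ^ 2 -> lam ^ 2 * eps = 16 * Rp ^ 2 -> 0 <= lam ->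
  disjoint (swept si (padd t (pscale lam u))) (D (padd tj (pscale lam u))).
Proof.
  intros Hu Hdir Hsep Heps Hoff Hlam Hlam0.
  apply swept_far. intros tau Htau.
  replace (sq (padd tj (pscale lam u)) (seg si (padd t (pscale lam u)) tau))
    with (nsq (psub (psub tj t)
                 (pscale (1 - tau) (padd (pscale lam (pscale (-1) u)) (psub si t)))))
    by (unfold sq, seg, nsq, psub, padd, pscale; simpl; ring).
  apply (clearance _ _ _ lam eps Rp); try lra.
  - rewrite <- Hu. unfold nsq, pscale; simpl; ring.
  - unfold dot, pscale in *; simpl in *. lra.
  - apply dist2_ge_sq; [lra | exact Hsep].
  - fold (sq si t). rewrite sq_sym. exact Hoff.
Qed.

Fixpoint insert_by (f : pt -> R) (x : pt) (l : list pt) : list pt :=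
  match l with
  | nil => x :: nil
  | y :: l' => if Rle_dec (f y) (f x) then x :: l else y :: insert_by f x l'
  end.

Fixpoint sort_by (f : pt -> R) (l : list pt) : list pt :=
  match l with nil => nil | x :: l' => insert_by f x (sort_by f l') end.

Definition above (f : pt -> R) (a b : pt) : Prop := f b <= f a.

Lemma insert_by_perm f x l : Permutation (x :: l) (insert_by f x l).
Proof.
  induction l as [|y l IH]; simpl; [auto|].
  destruct (Rle_dec (f y) (f x)); [auto|].
  eapply perm_trans; [apply perm_swap|]. auto.
Qed.

Lemma sort_by_perm f l : Permutation l (sort_by f l).
Proof.
  induction l as [|x l IH]; simpl; [auto|].
  eapply perm_trans; [apply perm_skip, IH|]. apply insert_by_perm.
Qed.

Lemma insert_by_sorted f x l :
  StronglySorted (above f) l -> StronglySorted (above f) (insert_by f x l).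
Proof.
  induction l as [|y l IH]; simpl; intro Hl; [repeat constructor|].
  apply StronglySorted_inv in Hl as [Hl Hy]. rewrite Forall_forall in Hy.
  destruct (Rle_dec (f y) (f x)) as [Hle|Hgt].
  - constructor; [constructor; [exact Hl | apply Forall_forall; exact Hy]|].
    constructor; [exact Hle|]. rewrite Forall_forall.
    intros z Hz. specialize (Hy z Hz). unfold above in *. lra.
  - constructor; [auto|]. rewrite Forall_forall. intros z Hz.
    apply (Permutation_in _ (Permutation_sym (insert_by_perm f x l))) in Hz.
    destruct Hz as [<-|Hz]; [unfold above; lra | auto].
Qed.

Lemma sort_by_sorted f l : StronglySorted (above f) (sort_by f l).
Proof. induction l; simpl; [constructor | apply insert_by_sorted; auto]. Qed.

Lemma sorted_nth f l d : StronglySorted (above f) l ->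
  forall i j, (i < j < length l)%nat -> f (nth j l d) <= f (nth i l d).
Proof.
  induction l as [|x l IH]; intros Hl i j Hij; simpl in *; [lia|].
  apply StronglySorted_inv in Hl as [Hl Hx]. rewrite Forall_forall in Hx.
  destruct i as [|i], j as [|j]; try lia.
  - apply Hx, nth_In. lia.
  - apply IH; auto. lia.
Qed.

Lemma sort_by_nth f l d i j :
  (i < j < length (sort_by f l))%nat -> f (nth j (sort_by f l) d) <= f (nth i (sort_by f l) d).
Proof. apply sorted_nth, sort_by_sorted. Qed.

Lemma pnorm_nsq p : pnorm p = sqrt (nsq p).
Proof. reflexivity. Qed.

Lemma unit_nsq u : pnorm u = 1 -> nsq u = 1.
Proof.
  rewrite pnorm_nsq. intro H.
  rewrite <- (pow2_sqrt (nsq u)) by apply nsq_nonneg. rewrite H. ring.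
Qed.

Lemma pnorm_scale_unit lam u : nsq u = 1 -> 0 <= lam -> pnorm (pscale lam u) = lam.
Proof.
  intros Hu Hlam. rewrite pnorm_nsq.
  replace (nsq (pscale lam u)) with (lam ^ 2 * nsq u) by (unfold nsq, pscale; simpl; ring).
  rewrite Hu, Rmult_1_r. apply sqrt_pow2, Hlam.
Qed.

Lemma pnorm_add_le a b : sqrt (nsq (padd a b)) <= sqrt (nsq a) + sqrt (nsq b).
Proof.
  pose proof (sqrt_pos (nsq a)) as Ha. pose proof (sqrt_pos (nsq b)) as Hb.
  rewrite <- (sqrt_pow2 (sqrt (nsq a) + sqrt (nsq b))) by lra.
  apply sqrt_le_1_alt.
  assert (Hab : dot a b <= sqrt (nsq a) * sqrt (nsq b)).
  { pose proof (cauchy_schwarz a b) as HCS.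
    rewrite <- (pow2_sqrt (nsq a)), <- (pow2_sqrt (nsq b)) in HCS by apply nsq_nonneg.
    assert (0 <= sqrt (nsq a) * sqrt (nsq b)) by nra. nra. }
  replace (nsq (padd a b)) with (nsq a + 2 * dot a b + nsq b)
    by (unfold nsq, dot, padd; simpl; ring).
  rewrite <- (pow2_sqrt (nsq a)) at 1 by apply nsq_nonneg.
  rewrite <- (pow2_sqrt (nsq b)) at 1 by apply nsq_nonneg.
  nra.
Qed.

Lemma dist2_translate t v c : dist2 (padd t v) c <= dist2 t c + pnorm v.
Proof.
  rewrite !dist2_sq, pnorm_nsq.
  replace (sq (padd t v) c) with (nsq (padd (psub t c) v))
    by (unfold sq, nsq, psub, padd; simpl; ring).
  apply pnorm_add_le.
Qed.

Lemma r_le P c rho p0 : In p0 P -> encloses P c rho -> r P <= rho.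
Proof.
  intros Hp He. unfold r.
  destruct (Glb_Rbar_correct (fun rho => exists c, encloses P c rho)) as [Hlb Hglb].
  assert (Hup : Rbar_le (Glb_Rbar (fun rho => exists c, encloses P c rho)) rho)
    by (apply Hlb; eauto).
  assert (Hlow : Rbar_le 0 (Glb_Rbar (fun rho => exists c, encloses P c rho))).
  { apply Hglb. intros x [c' Hc']. pose proof (Hc' p0 Hp).
    pose proof (sqrt_pos (sq p0 c')). rewrite <- dist2_sq in *. simpl. lra. }
  destruct (Glb_Rbar (fun rho => exists c, encloses P c rho)); simpl in *; tauto.
Qed.

Lemma r_nonneg P c p : In p P -> sed_center P c -> 0 <= r P.
Proof.
  intros Hp Hc. specialize (Hc p Hp).
  pose proof (sqrt_pos (sq p c)). rewrite <- dist2_sq in *. lra.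
Qed.

Lemma sq_across S T c s t :
  sed_center S c -> sed_center T c -> In s S -> In t T -> sq t s <= 2 * (r S + r T) ^ 2.
Proof.
  intros HcS HcT Hs Ht.
  pose proof (r_nonneg S c s Hs HcS). pose proof (r_nonneg T c t Ht HcT).
  pose proof (sq_midpoint t s c).
  pose proof (dist2_le_sq _ _ _ (HcS s Hs)). pose proof (dist2_le_sq _ _ _ (HcT t Ht)).
  nra.
Qed.

Lemma r_append_translate S T c v s0 t0 :
  In s0 S -> In t0 T -> sed_center S c -> sed_center T c ->
  r (S ++ translate T v) <= r S + r T + pnorm v.
Proof.
  intros Hs0 Ht0 HcS HcT.
  pose proof (r_nonneg S c s0 Hs0 HcS). pose proof (r_nonneg T c t0 Ht0 HcT).
  pose proof (sqrt_pos (nsq v)). rewrite <- pnorm_nsq in *.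
  apply (r_le _ c _ s0); [apply in_or_app; auto|].
  intros p Hp. apply in_app_or in Hp as [Hp|Hp].
  - specialize (HcS p Hp). lra.
  - unfold translate in Hp. apply in_map_iff in Hp as [t [<- Ht]].
    pose proof (dist2_translate t v c). specialize (HcT t Ht). lra.
Qed.

Lemma dot_psub p q u : dot (psub p q) u = dot p u - dot q u.
Proof. unfold dot, psub; simpl; ring. Qed.

Lemma nth_in_perm (l a : list pt) d i : Permutation l a -> (i < length a)%nat -> In (nth i a d) l.
Proof. intros Hp Hi. apply (Permutation_in _ (Permutation_sym Hp)), nth_In, Hi. Qed.

Lemma translate_NoDup T v : NoDup T -> NoDup (translate T v).
Proof.
  intro Hnd. apply FinFun.Injective_map_NoDup; auto.
  intros [x1 y1] [x2 y2] H. unfold padd in H; simpl in H.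
  injection H as H1 H2. f_equal; lra.
Qed.

Lemma translated_schedule_feasible eps n S T u lam Rp :
  0 < eps <= 1 -> config n (2 + eps) S -> config n (2 + eps) T -> nsq u = 1 ->
  (forall s t, In s S -> In t T -> sq t s <= 2 * Rp ^ 2) ->
  lam ^ 2 * eps = 16 * Rp ^ 2 -> 0 <= lam ->
  unlabeled_feasible S (translate T (pscale lam u)).
Proof.
  intros Heps [HlS [HndS HsepS]] [HlT [HndT HsepT]] Hu Hoff Hlam Hlam0.
  set (v := pscale lam u). set (f := fun p => dot p u).
  set (a := sort_by f S). set (b := sort_by f (translate T v)).
  assert (Hpa : Permutation S a) by apply sort_by_perm.
  assert (Hpb : Permutation (translate T v) b) by apply sort_by_perm.
  assert (Hla : length a = n) by (rewrite <- (Permutation_length Hpa); exact HlS).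
  assert (Hlb : length b = n).
  { rewrite <- (Permutation_length Hpb). unfold translate. rewrite length_map. exact HlT. }
  assert (HndA : NoDup a) by exact (Permutation_NoDup Hpa HndS).
  assert (HndB : NoDup b) by exact (Permutation_NoDup Hpb (translate_NoDup T v HndT)).
  assert (HaS : forall i, (i < n)%nat -> In (nth i a (0, 0)) S)
    by (intros i Hi; apply (nth_in_perm _ _ _ _ Hpa); lia).
  assert (HbT : forall i, (i < n)%nat -> exists t, In t T /\ nth i b (0, 0) = padd t v).
  { intros i Hi.
    assert (Hin : In (nth i b (0, 0)) (translate T v))
      by (apply (nth_in_perm _ _ _ _ Hpb); lia).
    apply in_map_iff in Hin as [t [Hbt Ht]]. eauto. }
  exists a, b. split; [exact Hpa|]. split; [exact Hpb|]. split; [lia|].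
  intros i Hi. rewrite Hla in Hi.
  destruct (HbT i Hi) as [t [Ht Hbi]]. rewrite Hbi.
  split.
  - intros j Hj.
    apply (later_source_clear _ _ t u lam eps Rp); try assumption.
    3: apply Hoff; [apply HaS; lia | exact Ht].
    + pose proof (sort_by_nth f S (0, 0) i j Hj) as Hord.
      change (dot (nth j a (0, 0)) u <= dot (nth i a (0, 0)) u) in Hord.
      rewrite dot_psub. lra.
    + apply HsepS; [apply HaS; lia | apply HaS; lia |].
      intro Heq. apply (proj1 (NoDup_nth a (0, 0)) HndA j i) in Heq; lia.
  - intros j Hj. destruct (HbT j) as [tj [Htj Hbj]]; [lia|]. rewrite Hbj.
    apply (earlier_target_clear _ _ t u lam eps Rp); try assumption.
    3: apply Hoff; [apply HaS; lia | exact Ht].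
    + pose proof (sort_by_nth f (translate T v) (0, 0) j i ltac:(fold b; lia)) as Hord.
      change (dot (nth i b (0, 0)) u <= dot (nth j b (0, 0)) u) in Hord.
      rewrite Hbi, Hbj in Hord. rewrite dot_psub. unfold dot, padd in *. simpl in *. lra.
    + apply HsepT; auto. intros ->.
      assert (j = i) by (apply (proj1 (NoDup_nth b (0, 0)) HndB); try lia; congruence).
      lia.
Qed.

Lemma step_length eps Rp : 0 < eps <= 1 -> 0 <= Rp ->
  let lam := 4 * Rp / sqrt eps in
  0 <= lam /\ lam ^ 2 * eps = 16 * Rp ^ 2 /\ Rp + lam <= 5 * Rp / sqrt eps.
Proof.
  intros Heps HRp lam.
  assert (Hm : 0 < sqrt eps) by (apply sqrt_lt_R0; lra).
  assert (Hmm : sqrt eps * sqrt eps = eps) by (apply sqrt_sqrt; lra).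
  assert (Hm1 : sqrt eps <= 1) by (rewrite <- sqrt_1; apply sqrt_le_1_alt; lra).
  assert (Hinv : 1 <= / sqrt eps) by (rewrite <- Rinv_1; apply Rinv_le_contravar; lra).
  unfold lam, Rdiv. repeat split.
  - apply Rmult_le_pos; [lra | left; apply Rinv_0_lt_compat, Hm].
  - rewrite <- Hmm at 2. field. lra.
  - nra.
Qed.

Lemma config_nonempty n d P : config n d P -> (1 <= n)%nat -> exists p, In p P.
Proof. intros [Hl _] Hn. exists (nth 0 P (0, 0)). apply nth_In. lia. Qed.

Theorem mainTheorem8 :
  exists C : R, 0 < C /\
  forall (eps : R) (n : nat) (S T : list pt),
    0 < eps <= 1 -> (2 <= n)%nat ->
    config n (2 + eps) S -> config n (2 + eps) T ->
    (exists c : pt, sed_center S c /\ sed_center T c) ->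
    forall delta : pt, pnorm delta = 1 ->
      exists lambda : R, 0 <= lambda /\
        let v := pscale lambda delta in
        unlabeled_feasible S (translate T v) /\
        pnorm v <= C * (r S + r T) / sqrt eps /\
        r (S ++ translate T v) <= C * (r S + r T) / sqrt eps.
Proof.
  exists 5. split; [lra|].
  intros eps n S T Heps Hn HS HT [c [HcS HcT]] delta Hdelta.
  pose proof (unit_nsq delta Hdelta) as Hu.
  destruct (config_nonempty n _ S HS) as [s0 Hs0]; [lia|].
  destruct (config_nonempty n _ T HT) as [t0 Ht0]; [lia|].
  set (Rp := r S + r T).
  assert (HRp : 0 <= Rp).
  { pose proof (r_nonneg S c s0 Hs0 HcS). pose proof (r_nonneg T c t0 Ht0 HcT).
    unfold Rp. lra. }
  destruct (step_length eps Rp Heps HRp) as (Hlam0 & Hlam & Hbound).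
  exists (4 * Rp / sqrt eps). split; [exact Hlam0|]. cbv zeta.
  rewrite (pnorm_scale_unit _ _ Hu Hlam0).
  split; [|split].
  - apply (translated_schedule_feasible eps n S T delta _ Rp); auto.
    intros s t Hs Ht. apply (sq_across S T c); auto.
  - lra.
  - eapply Rle_trans; [apply (r_append_translate S T c _ s0 t0); auto|].
    rewrite (pnorm_scale_unit _ _ Hu Hlam0). fold Rp. lra.
Qed.
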